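(* Let $(X,d,\alpha)$ be a computable metric space, let $n\ge1$, and let $S$ be a semi-computable compact set in this space. Then (i) the set $\{l\in\mathbb N: \mathcal H_l \text{ covers } S\}$ is computably enumerable; (ii) the set $\{l\in\mathbb N:\text{the lower boundary of }\mathcal H_l\text{ covers }S\}$ is computably enumerable.
   Context: A computable metric space is a triple $(X,d,\alpha)$ where $(X,d)$ is a metric space and $\alpha=(\alpha_i)_{i\in\mathbb N}$ is a sequence with dense range in $(X,d)$ such that $(i,j)\mapsto d(\alpha_i,\alpha_j)$ is a computable function $\mathbb N^2\to\mathbb R$ (a function $g:\mathbb N^k\to\mathbb R$ is computable if there is a computable $G:\mathbb N^{k+1}\to\mathbb Q$ with $|g(x)-G(x,i)|<2^{-i}$ for all $x,i$). Fix a computable $q:\mathbb N\to\mathbb Q$ whose image is the set of positive rationals and computable $\tau_1,\tau_2:\mathbb N\to\mathbb N$ with $\{(\tau_1(i),\tau_2(i)):i\in\mathbb N\}=\mathbb N^2$; let $\lambda_i=\alpha_{\tau_1(i)}$, $\rho_i=q_{\tau_2(i)}$, $I_i=B(\lambda_i,\rho_i)$ (open ball). Fix computable $\sigma:\mathbb N^2\to\mathbb N$, $\eta:\mathbb N\to\mathbb N$ such that $\{(\sigma(j,0),\dots,\sigma(j,\eta(j))):j\in\mathbb N\}$ is the set of all nonempty finite sequences in $\mathbb N$; write $(j)_i=\sigma(j,i)$, $[j]=\{(j)_i:0\le i\le\eta(j)\}$ and $J_j=\bigcup_{i\in[j]}I_i$. $S$ is semi-computable compact if $S$ is compact and $\{j:S\subseteq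 J_j\}$ is computably enumerable. Fix a computable injection $\nu:\mathbb N^n\to\mathbb N$; for $l,j_1,\dots,j_n\in\mathbb N$ write $\widehat l=\tau_2(l)$ and $(l)_{j_1,\dots,j_n}=(\tau_1(l))_{\nu(j_1,\dots,j_n)}$. Let $\mathcal H_l$ be the function $\{0,\dots,\widehat l\}^n\to\mathcal P(X)$, $(j_1,\dots,j_n)\mapsto J_{(l)_{j_1,\dots,j_n}}$. Its lower boundary is the function $\{0,\dots,\widehat l\}^{n-1}\to\mathcal P(X)$, $(j_1,\dots,j_{n-1})\mapsto J_{(l)_{j_1,\dots,j_{n-1},0}}$. A function $g:A\to\mathcal P(X)$ covers $S$ if $S\subseteq\bigcup_{a\in A}g(a)$. *)

From Stdlib Require Import Reals QArith Qreals List Arith.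
Open Scope R_scope.

Definition cpair (x y : nat) : nat := ((x + y) * (x + y + 1)) / 2 + y.

Fixpoint tcode (l : list nat) : nat :=
  match l with
  | nil => 0
  | cons x l' => S (cpair x (tcode l'))
  end.

Inductive code : Type :=
| CZero : code
| CSucc : code
| CId   : code
| CFst  : code
| CSnd  : code
| CComp : code -> code -> code
| CPair : code -> code -> code
| CRec  : code -> code -> code
| CMu   : code -> code.

Inductive eval : code -> nat -> nat -> Prop :=
| eZero n : eval CZero n 0
| eSucc n : eval CSucc n (S n)
| eId n : eval CId n n
| eFst x y : eval CFst (cpair x y) x
| eSnd x y : eval CSnd (cpair x y) y
| eComp f g x y z : eval g x y -> eval f y z -> eval (CComp f g) x z
| ePair f g x y z : eval f x y -> eval g x z -> eval (CPair f g) x (cpair y z)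
| eRec0 f g a y : eval f a y -> eval (CRec f g) (cpair a 0) y
| eRecS f g a k y z :
    eval (CRec f g) (cpair a k) y -> eval g (cpair a (cpair k y)) z ->
    eval (CRec f g) (cpair a (S k)) z
| eMu f x m :
    eval f (cpair x m) 0 ->
    (forall k, (k < m)%nat -> exists v, v <> 0%nat /\ eval f (cpair x k) v) ->
    eval (CMu f) x m.

Definition computable1 (f : nat -> nat) : Prop :=
  exists c, forall x, eval c x (f x).
Definition computable2 (f : nat -> nat -> nat) : Prop :=
  exists c, forall x y, eval c (tcode (x :: y :: nil)) (f x y).
Definition computable3 (f : nat -> nat -> nat -> nat) : Prop :=
  exists c, forall x y z, eval c (tcode (x :: y :: z :: nil)) (f x y z).
Definition computable_tuple (n : nat) (f : list nat -> nat) : Prop :=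
  exists c, forall l, length l = n -> eval c (tcode l) (f l).

Definition ce (A : nat -> Prop) : Prop :=
  exists c, forall x, A x <-> exists y, eval c x y.

Definition qof (a b c : nat) : Q :=
  ((if Nat.even c then 1 else -1) * inject_Z (Z.of_nat a) / inject_Z (Z.of_nat (S b)))%Q.

Definition computableQ1 (q : nat -> Q) : Prop :=
  exists a b c, computable1 a /\ computable1 b /\ computable1 c /\
    forall x, (q x == qof (a x) (b x) (c x))%Q.

Definition computableR2 (g : nat -> nat -> R) : Prop :=
  exists a b c, computable3 a /\ computable3 b /\ computable3 c /\
    forall x y i, Rabs (g x y - Q2R (qof (a x y i) (b x y i) (c x y i))) < / 2 ^ i.

Definition is_metric {X : Type} (d : X -> X -> R) : Prop :=
  (forall x y, d x y = 0 <-> x = y) /\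
  (forall x y, d x y = d y x) /\
  (forall x y z, d x z <= d x y + d y z).

Definition dense_seq {X : Type} (d : X -> X -> R) (alpha : nat -> X) : Prop :=
  forall x e, 0 < e -> exists i, d x (alpha i) < e.

Definition is_open {X : Type} (d : X -> X -> R) (U : X -> Prop) : Prop :=
  forall x, U x -> exists e, 0 < e /\ forall y, d x y < e -> U y.

Definition compact {X : Type} (d : X -> X -> R) (S : X -> Prop) : Prop :=
  forall (I : Type) (U : I -> X -> Prop),
    (forall i, is_open d (U i)) ->
    (forall x, S x -> exists i, U i x) ->
    exists l : list I, forall x, S x -> exists i, In i l /\ U i x.

Definition Iball {X : Type} (d : X -> X -> R) (alpha : nat -> X) (q : nat -> Q)
  (tau1 tau2 : nat -> nat) (i : nat) : X -> Prop :=
  fun x => d (alpha (tau1 i)) x < Q2R (q (tau2 i)).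

Definition Junion {X : Type} (d : X -> X -> R) (alpha : nat -> X) (q : nat -> Q)
  (tau1 tau2 : nat -> nat) (sigma : nat -> nat -> nat) (eta : nat -> nat)
  (j : nat) : X -> Prop :=
  fun x => exists i, (i <= eta j)%nat /\ Iball d alpha q tau1 tau2 (sigma j i) x.

Definition semicomputable_compact {X : Type} (d : X -> X -> R) (alpha : nat -> X)
  (q : nat -> Q) (tau1 tau2 : nat -> nat) (sigma : nat -> nat -> nat)
  (eta : nat -> nat) (S : X -> Prop) : Prop :=
  compact d S /\
  ce (fun j => forall x, S x -> Junion d alpha q tau1 tau2 sigma eta j x).

Definition enumerates_finite_seqs (sigma : nat -> nat -> nat) (eta : nat -> nat) : Prop :=
  forall s : list nat, s <> nil ->
    exists j, S (eta j) = length s /\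
      forall i, (i < length s)%nat -> sigma j i = nth i s 0%nat.

(* H_l covers S: S is contained in the union over (j_1..j_n) in {0..tau2 l}^n of
   J_{(l)_{j_1..j_n}}, where (l)_{j_1..j_n} = sigma (tau1 l) (nu (j_1..j_n)) *)
Definition H_covers {X : Type} (d : X -> X -> R) (alpha : nat -> X) (q : nat -> Q)
  (tau1 tau2 : nat -> nat) (sigma : nat -> nat -> nat) (eta : nat -> nat)
  (n : nat) (nu : list nat -> nat) (S : X -> Prop) (l : nat) : Prop :=
  forall x, S x -> exists js : list nat,
    length js = n /\ Forall (fun j => (j <= tau2 l)%nat) js /\
    Junion d alpha q tau1 tau2 sigma eta (sigma (tau1 l) (nu js)) x.

Definition lowerH_covers {X : Type} (d : X -> X -> R) (alpha : nat -> X) (q : nat -> Q)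
  (tau1 tau2 : nat -> nat) (sigma : nat -> nat -> nat) (eta : nat -> nat)
  (n : nat) (nu : list nat -> nat) (S : X -> Prop) (l : nat) : Prop :=
  forall x, S x -> exists js : list nat,
    length js = (n - 1)%nat /\ Forall (fun j => (j <= tau2 l)%nat) js /\
    Junion d alpha q tau1 tau2 sigma eta (sigma (tau1 l) (nu (js ++ 0%nat :: nil))) x.

From Stdlib Require Import Reals QArith Qreals List Arith Lia Classical Wf_nat.

(* For fixed [l], the cells [J_((l)_(j_1,...,j_n))] of [H_l] are finitely many finite
   unions of rational balls, so their union is again some [J_j]: concatenate their index
   lists, which [sigma] enumerates.  The relation "[j] is the concatenation of the index
   lists of the cells of [H_l]" only involves bounded quantifiers (over [{0..tau2 l}^n]
   and over the lists [[j]]), hence is decidable, and for any such [j], [H_l] covers [S]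
   iff [S] is contained in [J_j].  Searching for the least such [j] and then running the
   enumeration of [{j | S ⊆ J_j}] enumerates [{l | H_l covers S}]; the lower boundary is
   the same with the last coordinate fixed to [0]. *)

Open Scope nat_scope.

(** * Cantor pairing *)

Definition tri (s : nat) : nat := s * (s + 1) / 2.

Lemma tri_S s : tri (S s) = tri s + S s.
Proof.
  unfold tri; replace (S s * (S s + 1)) with (s * (s + 1) + S s * 2) by nia.
  rewrite Nat.div_add by lia; lia.
Qed.

Lemma tri_monotone a b : a <= b -> tri a <= tri b.
Proof. induction 1; [lia | rewrite tri_S; lia]. Qed.

Lemma cpair_tri x y : cpair x y = tri (x + y) + y.
Proof. reflexivity. Qed.

Lemma cpair_inj x y x' y' : cpair x y = cpair x' y' -> x = x' /\ y = y'.
Proof.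
  rewrite !cpair_tri; intros E.
  destruct (lt_eq_lt_dec (x + y) (x' + y')) as [[lt | eq] | lt].
  - pose proof (tri_monotone _ _ lt); rewrite tri_S in *; lia.
  - rewrite eq in E; lia.
  - pose proof (tri_monotone _ _ lt); rewrite tri_S in *; lia.
Qed.

(* Walks through the pairs diagonal by diagonal, in the order of [cpair]. *)
Fixpoint unpair (n : nat) : nat * nat :=
  match n with
  | 0 => (0, 0)
  | S n' => let (x, y) := unpair n' in
            match x with 0 => (S y, 0) | S x' => (x', S y) end
  end.

Definition cfst (n : nat) : nat := fst (unpair n).
Definition csnd (n : nat) : nat := snd (unpair n).

Lemma cpair_unpair n : cpair (cfst n) (csnd n) = n.
Proof.
  unfold cfst, csnd; induction n as [|n IH]; [reflexivity|].
  simpl; destruct (unpair n) as [[|x] y]; simpl in *; rewrite !cpair_tri in *.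
  - rewrite !Nat.add_0_r, tri_S; simpl in *; lia.
  - replace (x + S y) with (S x + y) by lia; lia.
Qed.

Lemma cfst_pair a b : cfst (cpair a b) = a.
Proof. exact (proj1 (cpair_inj _ _ _ _ (cpair_unpair (cpair a b)))). Qed.

Lemma csnd_pair a b : csnd (cpair a b) = b.
Proof. exact (proj2 (cpair_inj _ _ _ _ (cpair_unpair (cpair a b)))). Qed.

Ltac cpair_inversion :=
  repeat match goal with
  | H : cpair _ _ = cpair _ _ |- _ => apply cpair_inj in H; destruct H; subst
  | H : S _ = S _ |- _ => injection H as H; subst
  end.

(** * Partial recursive functions *)

Section Determinism.

Variables f g : code.
Hypothesis f_det : forall x y z, eval f x y -> eval f x z -> y = z.
Hypothesis g_det : forall x y z, eval g x y -> eval g x z -> y = z.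

Lemma eval_rec_det k : forall a y z,
  eval (CRec f g) (cpair a k) y -> eval (CRec f g) (cpair a k) z -> y = z.
Proof.
  induction k as [|k IHk]; intros a y z Hy Hz;
    inversion Hy; subst; inversion Hz; subst; cpair_inversion; try lia.
  - eauto.
  - match goal with
    | H : eval (CRec f g) _ ?u, H' : eval (CRec f g) _ ?v |- _ =>
        pose proof (IHk _ _ _ H H'); subst
    end; eauto.
Qed.

Lemma eval_mu_det x y z : eval (CMu f) x y -> eval (CMu f) x z -> y = z.
Proof.
  intros Hy Hz; inversion Hy as [| | | | | | | | | ? ? ? Hy0 Hy_below]; subst.
  inversion Hz as [| | | | | | | | | ? ? ? Hz0 Hz_below]; subst.
  destruct (lt_eq_lt_dec y z) as [[lt | eq] | lt]; auto; exfalso.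
  - destruct (Hz_below y lt) as [v [Hv Hfv]]; exact (Hv (f_det _ _ _ Hfv Hy0)).
  - destruct (Hy_below z lt) as [v [Hv Hfv]]; exact (Hv (f_det _ _ _ Hfv Hz0)).
Qed.

End Determinism.

Lemma eval_det c : forall x y z, eval c x y -> eval c x z -> y = z.
Proof.
  induction c as [| | | | | f IHf g IHg | f IHf g IHg | f IHf g IHg | f IHf];
    intros x y z Hy Hz.
  1-5: inversion Hy; inversion Hz; subst; cpair_inversion; reflexivity.
  - inversion Hy as [| | | | | ? ? ? u ? Hgu Hfu | | | |]; subst.
    inversion Hz as [| | | | | ? ? ? v ? Hgv Hfv | | | |]; subst.
    rewrite (IHg _ _ _ Hgu Hgv) in Hfu; eauto.
  - inversion Hy; inversion Hz; subst; cpair_inversion; f_equal; eauto.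
  - rewrite <- (cpair_unpair x) in Hy, Hz; exact (eval_rec_det _ _ IHf IHg _ _ _ _ Hy Hz).
  - exact (eval_mu_det _ IHf _ _ _ Hy Hz).
Qed.

Lemma computable_ext f g : computable1 f -> (forall x, f x = g x) -> computable1 g.
Proof. intros [c Hc] E; exists c; intros x; rewrite <- E; auto. Qed.

Lemma computable_const k : computable1 (fun _ => k).
Proof.
  exists (Nat.iter k (CComp CSucc) CZero); intros x.
  induction k as [|k IH]; simpl; econstructor; eauto; constructor.
Qed.

Lemma computable_id : computable1 (fun x => x).
Proof. exists CId; constructor. Qed.

Lemma computable_comp f g : computable1 f -> computable1 g -> computable1 (fun x => f (g x)).
Proof. intros [cf Hf] [cg Hg]; exists (CComp cf cg); econstructor; eauto. Qed.

Lemma computable_cpair f g :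
  computable1 f -> computable1 g -> computable1 (fun x => cpair (f x) (g x)).
Proof. intros [cf Hf] [cg Hg]; exists (CPair cf cg); econstructor; eauto. Qed.

Lemma computable_S : computable1 S.
Proof. exists CSucc; constructor. Qed.

Lemma computable_cfst : computable1 cfst.
Proof. exists CFst; intros x; rewrite <- (cpair_unpair x) at 1; constructor. Qed.

Lemma computable_csnd : computable1 csnd.
Proof. exists CSnd; intros x; rewrite <- (cpair_unpair x) at 1; constructor. Qed.

Fixpoint primrec (f g : nat -> nat) (a k : nat) : nat :=
  match k with 0 => f a | S k' => g (cpair a (cpair k' (primrec f g a k'))) end.

Lemma computable_primrec f g a k :
  computable1 f -> computable1 g -> computable1 a -> computable1 k ->
  computable1 (fun x => primrec f g (a x) (k x)).
Proof.
  intros [cf Hf] [cg Hg] Ha Hk.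
  assert (Hrec : computable1 (fun z => primrec f g (cfst z) (csnd z))).
  { exists (CRec cf cg); intros z; rewrite <- (cpair_unpair z) at 1.
    generalize (cfst z) (csnd z); intros a0 k0; induction k0; simpl; econstructor; eauto. }
  eapply computable_ext; [exact (computable_comp _ _ Hrec (computable_cpair _ _ Ha Hk))|].
  intros x; simpl; rewrite cfst_pair, csnd_pair; reflexivity.
Qed.

Ltac computable_step :=
  match goal with
  | |- computable1 (fun _ => ?k) => apply computable_const
  | |- computable1 (fun x => x) => apply computable_id
  | |- computable1 (fun x => cpair _ _) => apply computable_cpair
  | |- computable1 (fun x => primrec ?f ?g _ _) => apply (computable_primrec f g)
  | |- computable1 (fun x => S _) => apply (computable_comp S); [exact computable_S|]
  | |- computable1 (fun x => cfst _) => apply (computable_comp cfst); [exact computable_cfst|]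
  | |- computable1 (fun x => csnd _) => apply (computable_comp csnd); [exact computable_csnd|]
  | H : computable1 ?F |- computable1 (fun x => ?F _) => apply (computable_comp F); [exact H|]
  | |- computable1 S => exact computable_S
  | |- computable1 cfst => exact computable_cfst
  | |- computable1 csnd => exact computable_csnd
  | |- _ => assumption
  end.

Lemma computable_add f g : computable1 f -> computable1 g -> computable1 (fun x => f x + g x).
Proof.
  intros Hf Hg; eapply computable_ext.
  - apply (computable_primrec (fun a => a) (fun z => S (csnd (csnd z))) f g); repeat computable_step.
  - intros x; simpl; induction (g x); simpl; rewrite ?csnd_pair; lia.
Qed.

Lemma computable_mul f g : computable1 f -> computable1 g -> computable1 (fun x => f x * g x).
Proof.
  intros Hf Hg; eapply computable_ext.
  - apply (computable_primrec (fun _ => 0) (fun z => csnd (csnd z) + cfst z) f g);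
      repeat computable_step; apply computable_add; repeat computable_step.
  - intros x; simpl; induction (g x); simpl; rewrite ?csnd_pair, ?cfst_pair; lia.
Qed.

Lemma computable_pred f : computable1 f -> computable1 (fun x => pred (f x)).
Proof.
  intros Hf; eapply computable_ext.
  - apply (computable_primrec (fun _ => 0) (fun z => cfst (csnd z)) (fun _ => 0) f);
      repeat computable_step.
  - intros x; simpl; destruct (f x); simpl; rewrite ?csnd_pair, ?cfst_pair; reflexivity.
Qed.

Lemma computable_sub f g : computable1 f -> computable1 g -> computable1 (fun x => f x - g x).
Proof.
  intros Hf Hg; eapply computable_ext.
  - apply (computable_primrec (fun a => a) (fun z => pred (csnd (csnd z))) f g);
      repeat computable_step; apply computable_pred; repeat computable_step.
  - intros x; simpl; induction (g x); simpl; rewrite ?csnd_pair; lia.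
Qed.

Lemma computable_sigma sigma f g : computable2 sigma -> computable1 f -> computable1 g ->
  computable1 (fun x => sigma (f x) (g x)).
Proof.
  intros [c Hc] Hf Hg.
  assert (Hargs : computable1 (fun x => tcode (f x :: g x :: nil))) by (simpl; repeat computable_step).
  destruct Hargs as [c' Hc']; exists (CComp c c'); econstructor; eauto.
Qed.

Ltac solve_computable :=
  repeat (computable_step ||
    match goal with
    | |- computable1 (fun x => _ + _) => apply computable_add
    | |- computable1 (fun x => _ * _) => apply computable_mul
    | |- computable1 (fun x => _ - _) => apply computable_sub
    | |- computable1 (fun x => pred _) => apply computable_pred
    | |- computable1 pred => exact (computable_pred _ computable_id)
    | H : computable2 ?s |- computable1 (fun x => ?s _ _) => apply (computable_sigma s); [exact H| |]
    end).

(** * Decidable predicates *)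

Definition cdec (P : nat -> Prop) : Prop :=
  exists f, computable1 f /\ forall x, P x <-> f x = 0.

Definition cdec2 (P : nat -> nat -> Prop) : Prop := cdec (fun y => P (cfst y) (csnd y)).

Lemma cdec_ext P Q : cdec P -> (forall x, P x <-> Q x) -> cdec Q.
Proof. intros [f [Hf E]] E'; exists f; split; auto; intros x; rewrite <- E'; auto. Qed.

Lemma cdec_comp P h : cdec P -> computable1 h -> cdec (fun x => P (h x)).
Proof. intros [f [Hf E]] Hh; exists (fun x => f (h x)); split; [solve_computable | auto]. Qed.

Lemma cdec2_curry P : cdec P -> cdec2 (fun x i => P (cpair x i)).
Proof. intros HP; eapply cdec_ext; [exact HP|]; intros y; rewrite cpair_unpair; tauto. Qed.

Lemma cdec_and P Q : cdec P -> cdec Q -> cdec (fun x => P x /\ Q x).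
Proof.
  intros [f [Hf E]] [g [Hg E']]; exists (fun x => f x + g x); split; [solve_computable|].
  intros x; rewrite E, E'; lia.
Qed.

Lemma cdec_not P : cdec P -> cdec (fun x => ~ P x).
Proof.
  intros [f [Hf E]]; exists (fun x => 1 - f x); split; [solve_computable|].
  intros x; rewrite E; lia.
Qed.

Lemma cdec_eq f g : computable1 f -> computable1 g -> cdec (fun x => f x = g x).
Proof.
  intros Hf Hg; exists (fun x => (f x - g x) + (g x - f x)); split; [solve_computable | lia].
Qed.

(* The characteristic function of the bounded search is the running product
   of the characteristic function of [P] over [i < k]. *)
Lemma cdec_bounded_ex (P : nat -> nat -> Prop) N :
  cdec2 P -> computable1 N -> cdec (fun x => exists i, i <= N x /\ P x i).
Proof.
  intros [f [Hf E]] HN.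
  set (search x k := primrec (fun _ => 1)
                       (fun z => csnd (csnd z) * f (cpair (cfst z) (cfst (csnd z)))) x k).
  assert (Hsearch : forall x k, search x k = 0 <-> exists i, i < k /\ P x i).
  { intros x; induction k as [|k IHk]; unfold search in *; simpl.
    - split; [lia | intros [i [Hi _]]; lia].
    - rewrite !csnd_pair, !cfst_pair, Nat.mul_eq_0, IHk.
      specialize (E (cpair x k)); rewrite cfst_pair, csnd_pair in E; rewrite <- E.
      split.
      + intros [[i [Hi Hp]] | Hp]; [exists i | exists k]; split; auto.
      + intros [i [Hi Hp]]; destruct (Nat.eq_dec i k) as [-> | ne]; auto.
        left; exists i; split; [lia | auto]. }
  exists (fun x => search x (S (N x))); split; [unfold search; solve_computable|].
  intros x; rewrite Hsearch; split; intros [i [Hi Hp]]; exists i; split; auto; lia.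
Qed.

Lemma cdec_bounded_all (P : nat -> nat -> Prop) N :
  cdec2 P -> computable1 N -> cdec (fun x => forall i, i <= N x -> P x i).
Proof.
  intros HP HN.
  eapply cdec_ext; [exact (cdec_not _ (cdec_bounded_ex (fun x i => ~ P x i) N (cdec_not _ HP) HN))|].
  intros x; split.
  - intros Hn i Hi; apply NNPP; intros HnP; apply Hn; eauto.
  - intros Hall [i [Hi HnP]]; exact (HnP (Hall i Hi)).
Qed.

Definition bounded_tuple (k t : nat) (js : list nat) : Prop :=
  length js = k /\ Forall (fun j => j <= t) js.

Lemma bounded_tuple_cons k t j js :
  bounded_tuple (S k) t (j :: js) <-> j <= t /\ bounded_tuple k t js.
Proof.
  unfold bounded_tuple; simpl; split.
  - intros [Hl Hf]; inversion Hf; auto.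
  - intros [Hj [Hl Hf]]; auto.
Qed.

Lemma cdec_tuple_ex k : forall (P : nat -> nat -> Prop) T,
  cdec2 P -> computable1 T ->
  cdec (fun x => exists js, bounded_tuple k (T x) js /\ P x (tcode js)).
Proof.
  induction k as [|k IHk]; intros P T HP HT.
  - eapply cdec_ext; [exact (cdec_comp _ (fun x => cpair x 0) HP ltac:(solve_computable))|].
    intros x; cbv beta; rewrite cfst_pair, csnd_pair; split.
    + intros HP0; exists nil; repeat split; auto.
    + intros [[|j js] [[Hl _] HPx]]; [exact HPx | discriminate].
  - (* peel off the first entry [i] of the tuple and recurse on the pair [(x, i)] *)
    assert (Htail : cdec (fun w => exists js, bounded_tuple k (T (cfst w)) js /\
                         P (cfst w) (S (cpair (csnd w) (tcode js))))).
    { apply (IHk (fun w a => P (cfst w) (S (cpair (csnd w) a)))); [|solve_computable].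
      eapply cdec_ext; [exact (cdec_comp _ (fun w => cpair (cfst (cfst w))
                                                 (S (cpair (csnd (cfst w)) (csnd w)))) HP
                                                ltac:(solve_computable))|].
      intros w; cbv beta; rewrite cfst_pair, csnd_pair; tauto. }
    eapply cdec_ext; [exact (cdec_bounded_ex _ T (cdec2_curry _ Htail) HT)|].
    intros x; split.
    + intros [i [Hi [js [Hjs HPx]]]]; rewrite cfst_pair, csnd_pair in *.
      exists (i :: js); rewrite bounded_tuple_cons; auto.
    + intros [[|i js] [Hjs HPx]]; [destruct Hjs; discriminate|].
      apply bounded_tuple_cons in Hjs as [Hi Hjs].
      exists i; split; [exact Hi|]; exists js; rewrite cfst_pair, csnd_pair; auto.
Qed.

Lemma cdec_tuple_all k (P : nat -> nat -> Prop) T :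
  cdec2 P -> computable1 T ->
  cdec (fun x => forall js, bounded_tuple k (T x) js -> P x (tcode js)).
Proof.
  intros HP HT.
  eapply cdec_ext; [exact (cdec_not _ (cdec_tuple_ex k (fun x a => ~ P x a) T (cdec_not _ HP) HT))|].
  intros x; split.
  - intros Hn js Hjs; apply NNPP; intros HnP; apply Hn; eauto.
  - intros Hall [js [Hjs HnP]]; exact (HnP (Hall js Hjs)).
Qed.

(** * Enumerable sets *)

Lemma ce_ext (A B : nat -> Prop) : ce A -> (forall x, A x <-> B x) -> ce B.
Proof. intros [c Hc] E; exists c; intros x; rewrite <- E; auto. Qed.

(* Search for the least [j] with [D l j], then run the enumeration of [C] on it. *)
Lemma ce_of_dec_reduction (A C : nat -> Prop) (D : nat -> nat -> Prop) :
  ce C -> cdec2 D -> (forall l, exists j, D l j) ->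
  (forall l j, D l j -> (A l <-> C j)) -> ce A.
Proof.
  intros [cC HC] [f [[cf Hf] Ef]] Dtotal HAC.
  assert (ED : forall l j, D l j <-> f (cpair l j) = 0).
  { intros l j; rewrite <- Ef, cfst_pair, csnd_pair; reflexivity. }
  exists (CComp cC (CMu cf)); intros l; split.
  - intros Al.
    destruct (dec_inh_nat_subset_has_unique_least_element (D l) (fun j => classic (D l j))
                (Dtotal l)) as [j [[Dj Hleast] _]].
    destruct (proj1 (HC j) (proj1 (HAC l j Dj) Al)) as [y Hy].
    exists y; econstructor; [constructor | exact Hy].
    + rewrite <- (proj1 (ED l j) Dj); apply Hf.
    + intros i Hi; exists (f (cpair l i)); split; [|apply Hf].
      rewrite <- ED; intros Di; specialize (Hleast i Di); lia.
  - intros [y Hy]; inversion Hy as [| | | | | ? ? ? j ? Hmu HCj | | | |]; subst.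
    inversion Hmu as [| | | | | | | | | ? ? ? Hj0 _]; subst.
    assert (Dj : D l j) by (apply ED; exact (eval_det _ _ _ _ (Hf _) Hj0)).
    apply (HAC l j Dj), HC; eauto.
Qed.

Fixpoint untcode (k a : nat) : list nat :=
  match k with 0 => nil | S k' => cfst (pred a) :: untcode k' (csnd (pred a)) end.

Lemma untcode_length k a : length (untcode k a) = k.
Proof. revert a; induction k; simpl; auto. Qed.

Lemma untcode_tcode js : untcode (length js) (tcode js) = js.
Proof. induction js; simpl; rewrite ?cfst_pair, ?csnd_pair; congruence. Qed.

Lemma computable_tcode_untcode_app k r : computable1 (fun a => tcode (untcode k a ++ r)).
Proof.
  induction k as [|k IHk]; simpl; [solve_computable|].
  set (F := fun a => tcode (untcode k a ++ r)) in *.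
  change (computable1 (fun a => S (cpair (cfst (pred a)) (F (csnd (pred a)))))); solve_computable.
Qed.

Lemma computable_tuple_untcode n nu k r : computable_tuple n nu -> k + length r = n ->
  computable1 (fun a => nu (untcode k a ++ r)).
Proof.
  intros [c Hc] Hkr; destruct (computable_tcode_untcode_app k r) as [c' Hc'].
  exists (CComp c c'); econstructor; [apply Hc' | apply Hc].
  rewrite length_app, untcode_length; exact Hkr.
Qed.

Lemma computable2_of_comp (F : nat -> nat -> nat) :
  (forall a b, computable1 a -> computable1 b -> computable1 (fun x => F (a x) (b x))) ->
  computable2 F.
Proof.
  intros HF.
  destruct (HF (fun t => cfst (pred t)) (fun t => cfst (pred (csnd (pred t)))))
    as [c Hc]; [solve_computable | solve_computable |].
  exists c; intros x y; specialize (Hc (tcode (x :: y :: nil))).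
  simpl in Hc; rewrite !csnd_pair in Hc; simpl in Hc; rewrite !cfst_pair in Hc; exact Hc.
Qed.

Fixpoint tuples (k t : nat) : list (list nat) :=
  match k with
  | 0 => nil :: nil
  | S k' => flat_map (fun j => map (cons j) (tuples k' t)) (seq 0 (S t))
  end.

Lemma in_tuples k t js : In js (tuples k t) <-> bounded_tuple k t js.
Proof.
  revert js; induction k as [|k IHk]; intros js; cbn [tuples In].
  - split; [intros [<- | []]; split; auto | intros [Hl _]; destruct js; [auto | discriminate]].
  - rewrite in_flat_map; split.
    + intros [j [Hj Hjs]]; apply in_map_iff in Hjs as [js' [<- Hjs']].
      apply in_seq in Hj; apply bounded_tuple_cons; split; [lia | apply IHk; auto].
    + intros Hjs; destruct js as [|j js']; [destruct Hjs; discriminate|].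
      apply bounded_tuple_cons in Hjs as [Hj Hjs']; exists j; split.
      * apply in_seq; lia.
      * apply in_map, IHk, Hjs'.
Qed.

(** * Finite unions of balls *)

Section FiniteUnions.

Variables (X : Type) (d : X -> X -> R) (alpha : nat -> X) (q : nat -> Q).
Variables (tau1 tau2 : nat -> nat) (sigma : nat -> nat -> nat) (eta : nat -> nat).

Local Notation J := (Junion d alpha q tau1 tau2 sigma eta).

Definition seq_mem (j e : nat) : Prop := exists i, i <= eta j /\ sigma j i = e.

Lemma Junion_seq_mem_union {A : Type} (P : A -> Prop) (f : A -> nat) j :
  (forall e, seq_mem j e <-> exists a, P a /\ seq_mem (f a) e) ->
  forall x, J j x <-> exists a, P a /\ J (f a) x.
Proof.
  intros Hj x; split.
  - intros [i [Hi Hx]].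
    destruct (proj1 (Hj (sigma j i)) (ex_intro _ i (conj Hi eq_refl)))
      as [a [Pa [i' [Hi' E]]]].
    exists a; split; [exact Pa|]; exists i'; rewrite E; auto.
  - intros [a [Pa [i' [Hi' Hx]]]].
    destruct (proj2 (Hj _) (ex_intro _ a (conj Pa (ex_intro _ i' (conj Hi' eq_refl)))))
      as [i [Hi E]].
    exists i; rewrite E; auto.
Qed.

Lemma seq_mem_of_list (L : list nat) : enumerates_finite_seqs sigma eta -> L <> nil ->
  exists j, forall e, seq_mem j e <-> In e L.
Proof.
  intros Henum HL; destruct (Henum L HL) as [j [Hlen Hnth]]; exists j; intros e; split.
  - intros [i [Hi <-]]; rewrite Hnth by lia; apply nth_In; lia.
  - intros He; destruct (In_nth L e 0 He) as [i [Hi <-]].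
    exists i; split; [lia | apply Hnth; exact Hi].
Qed.

Lemma cdec_seq_mem a b : computable2 sigma -> computable1 eta ->
  computable1 a -> computable1 b -> cdec (fun x => seq_mem (a x) (b x)).
Proof.
  intros Hs He Ha Hb; apply (cdec_bounded_ex (fun x i => sigma (a x) i = b x)); [|solve_computable].
  apply cdec_eq; solve_computable.
Qed.

End FiniteUnions.

Section TupleUnions.

Variables (sigma : nat -> nat -> nat) (eta : nat -> nat).
Variables (T : nat -> nat) (F : nat -> nat -> nat) (k : nat).

Local Notation mem := (seq_mem sigma eta).

Definition tuple_union_index (l j : nat) : Prop :=
  forall e, mem j e <-> exists js, bounded_tuple k (T l) js /\ mem (F l (tcode js)) e.

Lemma tuple_union_index_exists l :
  enumerates_finite_seqs sigma eta -> exists j, tuple_union_index l j.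
Proof.
  intros Henum.
  set (L := flat_map (fun js => map (sigma (F l (tcode js))) (seq 0 (S (eta (F l (tcode js))))))
              (tuples k (T l))).
  assert (HL : forall e, In e L <-> exists js, bounded_tuple k (T l) js /\ mem (F l (tcode js)) e).
  { intros e; unfold L; rewrite in_flat_map; split.
    - intros [js [Hjs He]]; apply in_map_iff in He as [i [<- Hi]]; apply in_seq in Hi.
      exists js; split; [apply in_tuples; exact Hjs | exists i; split; [lia | reflexivity]].
    - intros [js [Hjs [i [Hi <-]]]]; exists js; split; [apply in_tuples; exact Hjs|].
      apply in_map, in_seq; lia. }
  assert (Hnonempty : L <> nil).
  { intros HL0; apply (in_nil (a := sigma (F l (tcode (repeat 0 k))) 0)); rewrite <- HL0.
    apply HL; exists (repeat 0 k); split.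
    - split; [apply repeat_length | apply Forall_forall; intros j Hj; apply repeat_spec in Hj; lia].
    - exists 0; split; [lia | reflexivity]. }
  destruct (seq_mem_of_list sigma eta L Henum Hnonempty) as [j Hj].
  exists j; intros e; rewrite Hj; apply HL.
Qed.

Lemma tuple_union_index_bounded l j : tuple_union_index l j <->
  (forall i, i <= eta j ->
     exists js, bounded_tuple k (T l) js /\ mem (F l (tcode js)) (sigma j i)) /\
  (forall js, bounded_tuple k (T l) js ->
     forall i, i <= eta (F l (tcode js)) -> mem j (sigma (F l (tcode js)) i)).
Proof.
  split.
  - intros Hj; split.
    + intros i Hi; apply Hj; exists i; auto.
    + intros js Hjs i Hi; apply Hj; exists js; split; [exact Hjs | exists i; auto].
  - intros [Hsub Hsup] e; split.
    + intros [i [Hi <-]]; exact (Hsub i Hi).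
    + intros [js [Hjs [i [Hi <-]]]]; exact (Hsup js Hjs i Hi).
Qed.

Lemma cdec_tuple_union_index : computable1 T -> computable2 F -> computable2 sigma ->
  computable1 eta -> cdec2 tuple_union_index.
Proof.
  intros HT HF Hs He.
  eapply cdec_ext; [|intros y; symmetry; apply tuple_union_index_bounded].
  apply cdec_and.
  - apply (cdec_bounded_all (fun y i => exists js, bounded_tuple k (T (cfst y)) js /\
                                  mem (F (cfst y) (tcode js)) (sigma (csnd y) i)));
      [|solve_computable].
    apply (cdec_tuple_ex k (fun w a => mem (F (cfst (cfst w)) a) (sigma (csnd (cfst w)) (csnd w))));
      [|solve_computable].
    red; cbv beta; apply cdec_seq_mem; solve_computable.
  - apply (cdec_tuple_all k (fun y a => forall i, i <= eta (F (cfst y) a) ->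
                                  mem (csnd y) (sigma (F (cfst y) a) i)));
      [|solve_computable].
    apply (cdec_bounded_all (fun w i => mem (csnd (cfst w)) (sigma (F (cfst (cfst w)) (csnd w)) i)));
      [|solve_computable].
    red; cbv beta; apply cdec_seq_mem; solve_computable.
Qed.

End TupleUnions.

Section CoveringFamilies.

Variables (X : Type) (d : X -> X -> R) (alpha : nat -> X) (q : nat -> Q).
Variables (tau1 tau2 : nat -> nat) (sigma : nat -> nat -> nat) (eta : nat -> nat).
Variable S : X -> Prop.

Hypotheses (Hsigma : computable2 sigma) (Heta : computable1 eta).
Hypothesis Henum : enumerates_finite_seqs sigma eta.
Hypothesis HS : semicomputable_compact d alpha q tau1 tau2 sigma eta S.

Local Notation J := (Junion d alpha q tau1 tau2 sigma eta).

Lemma ce_covered_by_tuple_family (T : nat -> nat) (F : nat -> nat -> nat) (k : nat) :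
  computable1 T -> computable2 F ->
  ce (fun l => forall x, S x -> exists js, bounded_tuple k (T l) js /\ J (F l (tcode js)) x).
Proof.
  intros HT HF; destruct HS as [_ HScover].
  apply (ce_of_dec_reduction _ _ (tuple_union_index sigma eta T F k) HScover).
  - exact (cdec_tuple_union_index sigma eta T F k HT HF Hsigma Heta).
  - intros l; exact (tuple_union_index_exists sigma eta T F k l Henum).
  - intros l j Hj.
    pose proof (Junion_seq_mem_union X d alpha q tau1 tau2 sigma eta
                  (bounded_tuple k (T l)) (fun js => F l (tcode js)) j Hj) as HJ.
    split; intros Hcov x Sx; apply HJ; auto.
Qed.

Lemma ce_cells_cover (n : nat) (nu : list nat -> nat) (k : nat) (r : list nat) :
  k + length r = n -> computable1 tau1 -> computable1 tau2 -> computable_tuple n nu ->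
  ce (fun l => forall x, S x ->
        exists js, bounded_tuple k (tau2 l) js /\ J (sigma (tau1 l) (nu (js ++ r))) x).
Proof.
  intros Hkr Htau1 Htau2 Hnu.
  set (cell a := nu (untcode k a ++ r)).
  pose proof (computable_tuple_untcode n nu k r Hnu Hkr : computable1 cell) as Hcell.
  set (F l a := sigma (tau1 l) (cell a)).
  assert (HF : computable2 F)
    by (apply computable2_of_comp; intros a b Ha Hb; unfold F; solve_computable).
  assert (HF_tcode : forall l js, bounded_tuple k (tau2 l) js ->
                                 F l (tcode js) = sigma (tau1 l) (nu (js ++ r))).
  { intros l js [Hlen _]; unfold F, cell; rewrite <- Hlen, untcode_tcode; reflexivity. }
  eapply ce_ext; [exact (ce_covered_by_tuple_family tau2 F k Htau2 HF)|].
  intros l; split; intros Hcov x Sx; destruct (Hcov x Sx) as [js [Hjs Hx]];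
    exists js; rewrite HF_tcode in * by exact Hjs; auto.
Qed.

End CoveringFamilies.

Open Scope R_scope.

Theorem proposition5p3
  (X : Type) (d : X -> X -> R) (alpha : nat -> X)
  (q : nat -> Q) (tau1 tau2 : nat -> nat)
  (sigma : nat -> nat -> nat) (eta : nat -> nat)
  (n : nat) (nu : list nat -> nat) (S : X -> Prop) :
  is_metric d ->
  dense_seq d alpha ->
  computableR2 (fun i j => d (alpha i) (alpha j)) ->
  computableQ1 q ->
  (forall i, (0 < q i)%Q) ->
  (forall r : Q, (0 < r)%Q -> exists i, (q i == r)%Q) ->
  computable1 tau1 -> computable1 tau2 ->
  (forall a b, exists i, tau1 i = a /\ tau2 i = b) ->
  computable2 sigma -> computable1 eta ->
  enumerates_finite_seqs sigma eta ->
  (1 <= n)%nat ->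
  computable_tuple n nu ->
  (forall l1 l2, length l1 = n -> length l2 = n -> nu l1 = nu l2 -> l1 = l2) ->
  semicomputable_compact d alpha q tau1 tau2 sigma eta S ->
  ce (fun l => H_covers d alpha q tau1 tau2 sigma eta n nu S l) /\
  ce (fun l => lowerH_covers d alpha q tau1 tau2 sigma eta n nu S l).
Proof.
  intros _ _ _ _ _ _ Htau1 Htau2 _ Hsigma Heta Henum Hn Hnu _ HS; split.
  - eapply ce_ext.
    { apply (ce_cells_cover X d alpha q tau1 tau2 sigma eta S Hsigma Heta Henum HS n nu n nil);
        auto; simpl; lia. }
    intros l; unfold H_covers, bounded_tuple; split; intros Hcov x Sx;
      destruct (Hcov x Sx) as [js Hjs]; exists js; rewrite ?app_nil_r in *; tauto.
  - eapply ce_ext.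
    { apply (ce_cells_cover X d alpha q tau1 tau2 sigma eta S Hsigma Heta Henum HS n nu
               (n - 1) (0%nat :: nil)); auto; simpl; lia. }
    intros l; unfold lowerH_covers, bounded_tuple; split; intros Hcov x Sx;
      destruct (Hcov x Sx) as [js Hjs]; exists js; tauto.
Qed.
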